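(* Consider the TEP model described in the context. Let $\rho=(i_0,i_1),(i_1,i_2),\dots,(i_{L-1},i_L)$, $L=|\rho|\ge 1$, be a directed path of buses in which every consecutive pair $\{i_{t-1},i_t\}$ forms an established corridor. For each $t=1,\dots,L$ fix an existing-line index $k_t\in\{1,\dots,\omega^0_{i_{t-1}i_t}\}$ (the choice may differ between corridors). Define the coefficient vector $\boldsymbol{\pi}=(\pi_0,\pi_1,\dots,\pi_L)\in\mathbb{R}^{L+1}$ by $$\pi_0=\sum_{t=1}^{L} x_{i_{t-1}i_t,k_t}\,\overline{P}^0_{i_{t-1}i_t,k_t},\qquad \pi_t=\operatorname{sgn}(i_{t-1}-i_t)\,x_{i_{t-1}i_t,k_t}\quad (t=1,\dots,L).$$ Then the two-sided inequality $$-\pi_0\;\le\;\sum_{t=1}^{L}\pi_t\,\tilde{P}^0_{i_{t-1}i_t,k_t}\;\le\;\pi_0$$ is a valid inequality for TEP, i.e. it is satisfied by every feasible solution of the TEP model, for every such choice of line indices $k_1,\dots,k_L$.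
   Context: TEP model (DC-power-flow transmission expansion planning, disjunctive MILP). $B$ is a finite set of buses (integers); $\Omega$ is a set of corridors $(i,j)$ of buses, stored with $i<j$. Corridor $(i,j)$ has $\omega^0_{ij}\ge 0$ existing lines and $\bar\omega_{ij}\ge0$ candidate lines. Corridor $(i,j)$ is *established* if $\omega^0_{ij}>0$ and an *expansion corridor* if $\omega^0_{ij}=0$. Line $k$ of corridor $(i,j)$ has susceptance $b_{ij,k}$ and reactance $x_{ij,k}=-1/b_{ij,k}$; existing lines have capacity $\overline P^0_{ij,k}$, candidate lines capacity $\overline P_{ij,k}$. Further parameters: demands $d_n$, generation limits $\overline g_n$, angle limit $\overline\theta$, big-M constants $M_{ij}$, costs. Variables: binary $y_{ij,k}$ (build candidate line $k$ of corridor $(i,j)$), flows $P^0_{ij,k}$ (existing lines) and $P_{ij,k}$ (candidate lines), generation $g_n\ge 0$, bus angles $\theta_n$ (free). Constraints: for each bus $n$, $\sum_{(n,i)\in\Omega}\big(\sum_k P^0_{ni,k}+\sum_k P_{ni,k}\big)-\sum_{(i,n)\in\Omega}\big(\sum_k P^0_{in,k}+\sum_k P_{in,k}\big)+g_n=d_n$; $-\overline P^0_{ij,k}\le P^0_{ij,k}\le \overline P^0_{ij,k}$; $-\overline P_{ij,k}y_{ij,k}\le P_{ij,k}\le\overline P_{ij,k}y_{ij,k}$; $x_{ij,k}P^0_{ij,k}-(\theta_i-\theta_j)=0$ for existing lines; $-M_{ij}(1-y_{ij,k})\le x_{ij,k}P_{ij,k}-(\theta_i-\theta_j)\le M_{ij}(1-y_{ij,k})$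 for candidate lines; $g_n\le\overline g_n$; $-\overline\theta\le\theta_i-\theta_j\le\overline\theta$ for $(i,j)\in\Omega$; $y_{ij,k}\in\{0,1\}$. An inequality is *valid for TEP* if every feasible point of this model satisfies it. Notation along paths: for a bus pair traversed as $(i,j)$ with $i>j$ (so the stored corridor is $(j,i)$), set $x_{ij,k}=x_{ji,k}$, $\overline P^0_{ij,k}=\overline P^0_{ji,k}$ and $P^0_{ij,k}=-P^0_{ji,k}$. $\operatorname{sgn}(a)=1$ if $a>0$, $-1$ if $a<0$. Define $\tilde P^0_{ij,k}=\operatorname{sgn}(j-i)\,P^0_{ij,k}$. *)

From HB Require Import structures.
From mathcomp Require Import all_boot all_order all_algebra.
Set Implicit Arguments. Unset Strict Implicit. Unset Printing Implicit Defensive.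
Import Order.TTheory GRing.Theory Num.Theory.
Local Open Scope ring_scope.

(* Data of a TEP instance (DC power flow, disjunctive MILP).
   Buses are integers; lines of a corridor are indexed 0-based:
   existing lines k < w0 i j, candidate lines k < wbar i j.
   Costs are omitted: they do not affect the feasible set. *)
Record TEPData (R : realFieldType) := {
  buses   : seq int;
  corr    : seq (int * int);               (* Omega, stored with i < j *)
  w0      : int -> int -> nat;
  wbar    : int -> int -> nat;
  b0      : int -> int -> nat -> R;        (* susceptance of existing line k *)
  bc      : int -> int -> nat -> R;        (* susceptance of candidate line k *)
  Pbar0   : int -> int -> nat -> R;        (* capacity of existing line k *)
  Pbarc   : int -> int -> nat -> R;        (* capacity of candidate line k *)
  dem     : int -> R;
  gbar    : int -> R;                      (* generation limits *)
  thbar   : R;                             (* angle-difference limit *)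
  bigM    : int -> int -> R
}.

Definition x0 {R : realFieldType} (D : TEPData R) i j k : R := - (b0 D i j k)^-1.
Definition xc {R : realFieldType} (D : TEPData R) i j k : R := - (bc D i j k)^-1.

Definition wf_TEP {R : realFieldType} (D : TEPData R) : Prop :=
  uniq (buses D) /\ uniq (corr D) /\
  (forall i j, (i, j) \in corr D -> [/\ i < j, i \in buses D & j \in buses D]) /\
  (forall i j k, (k < w0 D i j)%N -> b0 D i j k < 0) /\
  (forall i j k, (k < wbar D i j)%N -> bc D i j k < 0).

Record TEPPoint (R : realFieldType) := {
  yv  : int -> int -> nat -> bool;
  P0v : int -> int -> nat -> R;            (* P^0_{ij,k} (stored corridor orientation) *)
  Pv  : int -> int -> nat -> R;
  gv  : int -> R;
  thv : int -> R
}.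

Definition flow_out {R : realFieldType} (D : TEPData R) (s : TEPPoint R) (i j : int) : R :=
  \sum_(k < w0 D i j) P0v s i j k + \sum_(k < wbar D i j) Pv s i j k.

Definition feasible {R : realFieldType} (D : TEPData R) (s : TEPPoint R) : Prop :=
  (forall n, n \in buses D ->
     \sum_(c <- corr D | c.1 == n) flow_out D s c.1 c.2
     - \sum_(c <- corr D | c.2 == n) flow_out D s c.1 c.2
     + gv s n = dem D n) /\
  (forall i j, (i, j) \in corr D -> 
     [/\
         forall k, (k < w0 D i j)%N ->
           - Pbar0 D i j k <= P0v s i j k <= Pbar0 D i j k /\
           x0 D i j k * P0v s i j k - (thv s i - thv s j) = 0,
         forall k, (k < wbar D i j)%N ->
           - (Pbarc D i j k * (yv s i j k)%:R) <= Pv s i j k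
               <= Pbarc D i j k * (yv s i j k)%:R /\
           - (bigM D i j * (1 - (yv s i j k)%:R))
               <= xc D i j k * Pv s i j k - (thv s i - thv s j)
               <= bigM D i j * (1 - (yv s i j k)%:R)
       &
         - thbar D <= thv s i - thv s j <= thbar D]) /\
  (forall n, n \in buses D -> 0 <= gv s n <= gbar D n).

(* Path notation: a bus pair (i,j) traversed in either direction. *)
Definition lo (i j : int) : int := Order.min i j.
Definition hi (i j : int) : int := Order.max i j.

Definition established {R : realFieldType} (D : TEPData R) (i j : int) : Prop :=
  i != j /\ (lo i j, hi i j) \in corr D /\ (0 < w0 D (lo i j) (hi i j))%N.

Definition xpath {R : realFieldType} (D : TEPData R) i j k : R := x0 D (lo i j) (hi i j) k.
Definition Pbar0path {R : realFieldType} (D : TEPData R) i j k : R := Pbar0 D (lo i j) (hi i j) k.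
Definition P0path {R : realFieldType} (s : TEPPoint R) (i j : int) k : R :=
  if i < j then P0v s i j k else - P0v s j i k.

Definition sgn {R : realFieldType} (a : int) : R := (Num.sg a)%:~R.

Definition Ptilde0 {R : realFieldType} (s : TEPPoint R) (i j : int) k : R :=
  sgn (j - i) * P0path s i j k.

(* coefficients of the path inequality; path buses p 0, ..., p L, line indices kk 1..L *)
Definition pi0 {R : realFieldType} (D : TEPData R) (L : nat) (p : nat -> int) (kk : nat -> nat) : R :=
  \sum_(1 <= t < L.+1) xpath D (p t.-1) (p t) (kk t) * Pbar0path D (p t.-1) (p t) (kk t).
Definition pit {R : realFieldType} (D : TEPData R) (p : nat -> int) (kk : nat -> nat) (t : nat) : R :=
  sgn (p t.-1 - p t) * xpath D (p t.-1) (p t) (kk t).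

From HB Require Import structures.
From mathcomp Require Import all_boot all_order all_algebra.
Import Order.TTheory GRing.Theory Num.Theory.
Local Open Scope ring_scope.

(* Since sgn (i - j) and sgn (j - i) have modulus one, the t-th summand has
   modulus x |P^0| for the stored orientation of the corridor; as x >= 0,
   the capacity constraint bounds it by x Pbar^0, and summing over the path
   gives |sum| <= pi_0. *)

Section PathTerm.

Variables (R : realFieldType) (D : TEPData R) (s : TEPPoint R).

Lemma normr_sgn (a : int) : a != 0 -> `|sgn a : R| = 1.
Proof. by move=> a_neq0; rewrite /sgn intr_sg normr_sg intr_eq0 a_neq0. Qed.

Lemma normr_P0path i j k :
  i != j -> `|P0path s i j k| = `|P0v s (lo i j) (hi i j) k|.
Proof.
rewrite /P0path /lo /hi neq_lt => /orP[ij | ji].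
  by rewrite ij min_l ?max_r // ltW.
by rewrite ltNge (ltW ji) /= min_r ?max_l ?normrN // ltW.
Qed.

Lemma xpath_ge0 i j k :
  wf_TEP D -> (k < w0 D (lo i j) (hi i j))%N -> 0 <= xpath D i j k.
Proof.
move=> [_ [_ [_ [b0_lt0 _]]]] k_lt.
by rewrite /xpath /x0 oppr_ge0 invr_le0 ltW // b0_lt0.
Qed.

Lemma feasible_normr_P0_le i j k :
  feasible D s -> (i, j) \in corr D -> (k < w0 D i j)%N ->
  `|P0v s i j k| <= Pbar0 D i j k.
Proof.
move=> [_ [corr_ok _]] ij_corr k_lt.
have [existing _ _] := corr_ok _ _ ij_corr.
by have [bounds _] := existing _ k_lt; rewrite ler_norml.
Qed.

Lemma path_term_normr_le i j k :
  wf_TEP D -> feasible D s -> established D i j ->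
  (k < w0 D (lo i j) (hi i j))%N ->
  `|sgn (i - j) * xpath D i j k * Ptilde0 s i j k|
    <= xpath D i j k * Pbar0path D i j k.
Proof.
move=> wf feas [i_neq_j [ij_corr _]] k_lt.
have x_ge0 : 0 <= xpath D i j k by exact: xpath_ge0.
have sg_ij : `|sgn (i - j) : R| = 1 by rewrite normr_sgn // subr_eq0.
have sg_ji : `|sgn (j - i) : R| = 1 by rewrite normr_sgn // subr_eq0 eq_sym.
rewrite /Ptilde0 !normrM sg_ij sg_ji !mul1r ger0_norm // normr_P0path //.
rewrite ler_wpM2l //; exact: feasible_normr_P0_le.
Qed.

End PathTerm.

Theorem lemma1 (R : realFieldType) (D : TEPData R) (L : nat) (p : nat -> int)
  (kk : nat -> nat) :
  wf_TEP D ->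
  (1 <= L)%N ->
  (* simple path: distinct buses of B *)
  (forall t, (t <= L)%N -> p t \in buses D) ->
  (forall t u, (t <= L)%N -> (u <= L)%N -> p t = p u -> t = u) ->
  (* consecutive buses form established corridors *)
  (forall t, (1 <= t <= L)%N -> established D (p t.-1) (p t)) ->
  (* chosen existing line indices (0-based) *)
  (forall t, (1 <= t <= L)%N -> (kk t < w0 D (lo (p t.-1) (p t)) (hi (p t.-1) (p t)))%N) ->
  forall s : TEPPoint R, feasible D s ->
    - pi0 D L p kk <= \sum_(1 <= t < L.+1) pit D p kk t * Ptilde0 s (p t.-1) (p t) (kk t)
    <= pi0 D L p kk.
Proof.
move=> wf _ _ _ est k_lt s feas; rewrite -ler_norml.
apply: le_trans (ler_norm_sum _ _ _) _; apply: ler_sum_nat => t t_in.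
exact: path_term_normr_le (est t t_in) (k_lt t t_in).
Qed.
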